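(* For every integer $k\ge1$, $2d(\{0,1,\ldots,k-1\})\ge d(\{0,1,\ldots,k\})$, and the inequality is strict for $k>1$.
   Context: For $A,B\subseteq\mathbb{N}=\{0,1,\ldots\}$, $A+B=\{a+b:a\in A,b\in B\}$. For a nonempty finite $C\subseteq\mathbb{N}$, $d(C)$ is the number of sets $B\subseteq\mathbb{N}$ such that $B+D=C$ for some $D\subseteq\mathbb{N}$. *)

From mathcomp Require Import all_boot all_order.
From mathcomp Require Import boolp classical_sets cardinality.
From mathcomp Require Import finmap.
Set Implicit Arguments. Unset Strict Implicit. Unset Printing Implicit Defensive.
Local Open Scope classical_set_scope.

Definition sumset (A B : set nat) : set nat :=
  [set x | exists a b, A a /\ B b /\ x = (a + b)%N].

Definition summands (C : set nat) : set (set nat) :=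
  [set B | exists D : set nat, sumset B D = C].

(* d(C) = number of such B (finite when C is finite and nonempty, since
   then every such B is a subset of C). *)
Definition dcount (C : set nat) : nat := #|` fset_set (summands C)|%fset.

From mathcomp Require Import all_boot all_order.
From mathcomp Require Import boolp classical_sets cardinality finmap zify.
Set Implicit Arguments. Unset Strict Implicit. Unset Printing Implicit Defensive.
Local Open Scope classical_set_scope.

(* A summand B of {0,...,k} contains 0 and has a greatest element m <= k; its
   co-summand is then {0,...,k-m}, i.e. the translates of {0,...,k-m} by the
   elements of B cover {0,...,k}.  Moving m down to m-1 turns B into a summand
   of {0,...,k-1}, and B is recovered from the image together with one bit:
   whether m-1 was already in B.  Hence d({0..k}) <= 2 d({0..k-1}).  For k >= 2
   the inequality is strict because {0,...,k-1} is not the image of a summand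
   whose bit is off: such a summand would have m = k, hence radius 0, and so
   would have to contain k-1. *)

Lemma finite_subsets (T : choiceType) (A : set T) :
  finite_set A -> finite_set [set B | B `<=` A].
Proof.
move=> /finite_fsetP[X ->].
apply: (@sub_finite_set _ _ ((fun Y : {fset T} => [set` Y]) @` [set` fpowerset X])).
  move=> B /= BX; exists [fset x in X | `[< B x >]]%fset.
    by rewrite /= fpowersetE; apply/fsubsetP => x; rewrite inE => /andP[].
  apply/seteqP; split => x /=; rewrite !inE /=.
    by move=> /andP[_ /asboolP].
  by move=> Bx; rewrite BX // asboolT.
by apply: finite_image; apply: finite_fset.
Qed.

Section DoubleCounting.
Local Open Scope fset_scope.

Lemma card_le_in_inj (T U : choiceType) (A : {fset T}) (C : {fset U}) (f : T -> U) :
  {in A &, injective f} -> {in A, forall x, f x \in C} -> (#|` A| <= #|` C|)%N.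
Proof.
move=> /card_in_imfsetP/eqP <- fAC; apply: fsubset_leq_card.
by apply/fsubsetP => _ /imfsetP[x /= Ax ->]; apply: fAC.
Qed.

Variables (T U : choiceType) (A : {fset T}) (B : {fset U}) (p : pred T) (f : T -> U).
Hypothesis f_into : {in A, forall x, f x \in B}.
Hypothesis f_inj_fibers : {in A &, forall x y, p x = p y -> f x = f y -> x = y}.

Let fiber b := [fset x in A | p x == b].

Let card_fibers : #|` A| = (#|` fiber true| + #|` fiber false|)%N.
Proof.
rewrite -(cardfsID (fiber true) A); congr addn; congr #|` _|; apply/fsetP => x;
  by rewrite !inE; case: (x \in A); case: (p x).
Qed.

Let card_fiber_le b (C : {fset U}) :
  {in A, forall x, p x = b -> f x \in C} -> (#|` fiber b| <= #|` C|)%N.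
Proof.
move=> fAC; apply: card_le_in_inj => [x y|x]; rewrite !inE => /andP[Ax /eqP px].
  by move=> /andP[Ay /eqP py]; apply: f_inj_fibers; rewrite // px py.
exact: fAC.
Qed.

Lemma card_le_double : (#|` A| <= 2 * #|` B|)%N.
Proof.
by rewrite card_fibers mul2n -addnn leq_add // card_fiber_le // => x /f_into.
Qed.

Lemma card_lt_double y : y \in B -> {in A, forall x, ~~ p x -> f x != y} ->
  (#|` A| < 2 * #|` B|)%N.
Proof.
move=> By f_miss; rewrite card_fibers.
have true_le : (#|` fiber true| <= #|` B|)%N by apply: card_fiber_le => x /f_into.
have false_le : (#|` fiber false| <= #|` B `\ y|)%N.
  by apply: card_fiber_le => x Ax px; rewrite !inE f_into // andbT f_miss // px.
have := cardfsD1 y B; rewrite By; lia.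
Qed.

End DoubleCounting.

Local Notation interval k := [set n : nat | (n <= k)%N].

Definition is_greatest (B : set nat) (m : nat) := B m /\ forall x, B x -> (x <= m)%N.

Lemma is_greatest_uniq B m m' : is_greatest B m -> is_greatest B m' -> m = m'.
Proof. by move=> [Bm Bm_ub] [Bm' Bm'_ub]; apply/eqP; rewrite eqn_leq Bm_ub ?Bm'_ub. Qed.

Lemma exists_greatest (B : set nat) n k :
  B n -> (forall x, B x -> (x <= k)%N) -> exists m, is_greatest B m.
Proof.
move=> Bn B_ub; have exB : exists i, `[< B i >] by exists n; apply/asboolP.
have ubB i : `[< B i >] -> (i <= k)%N by move=> /asboolP; apply: B_ub.
have [m /asboolP Bm m_max] := ex_maxnP exB ubB.
by exists m; split=> // x Bx; apply/m_max/asboolP.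
Qed.

Definition top (B : set nat) : nat := xget 0%N (is_greatest B).

Lemma topE B m : is_greatest B m -> top B = m.
Proof. by move=> Bm; apply: xget_unique => // m' /is_greatest_uniq; apply. Qed.

Definition interval_summand k (B : set nat) :=
  exists m, [/\ is_greatest B m, (m <= k)%N &
    forall x, (x <= k)%N -> exists2 b, B b & (b <= x <= b + (k - m))%N].

Lemma summands_intervalP k B : summands (interval k) B <-> interval_summand k B.
Proof.
split=> [[D BD] | [m [[Bm Bm_ub] mk B_cover]]]; last first.
  exists (interval (k - m)); apply/seteqP; split=> x /=.
    by move=> [b [d [Bb [/= dkm ->]]]]; have := Bm_ub _ Bb; lia.
  by move=> /B_cover[b Bb bx]; exists b, (x - b)%N; split=> //=; lia.
have sumP x : (x <= k)%N <-> exists b d, B b /\ D d /\ x = (b + d)%N.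
  by have /(congr1 (@^~ x)) := BD; rewrite /sumset /= => <-.
have [b [d [Bb [D0 /esym/eqP]]]] := (sumP 0%N).1 (leq0n _).
rewrite addn_eq0 => /andP[/eqP b0 /eqP d0]; subst b d.
have B_ub x : B x -> (x <= k)%N by move=> Bx; apply/sumP; exists x, 0%N; rewrite addn0.
have [m [Bm Bm_ub]] := exists_greatest Bb B_ub.
exists m; split=> //; first exact: B_ub.
move=> x /sumP[b [d [Bb' [Dd ->]]]]; exists b => //.
have : (m + d <= k)%N by apply/sumP; exists m, d.
lia.
Qed.

Lemma interval_summand0 k B : interval_summand k B -> B 0%N.
Proof. by move=> [m [_ _ /(_ 0%N (leq0n _))[b Bb]]]; rewrite leqn0 => /andP[/eqP <-]. Qed.

Lemma interval_summand_self k : interval_summand k (interval k).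
Proof.
exists k; split=> // [|x xk]; first by split=> /=.
by exists x; rewrite /= ?subnn ?addn0 ?leqnn.
Qed.

Lemma finite_summands_interval k : finite_set (summands (interval k)).
Proof.
apply: sub_finite_set (finite_subsets (finite_II k.+1)).
by move=> B /summands_intervalP[m [[_ Bm_ub] mk _]] x /Bm_ub xm; apply: leq_trans mk.
Qed.

Definition lower_top (B : set nat) : set nat :=
  [set x | (B x /\ x <> top B) \/ x = (top B).-1].

Definition top_pred_in (B : set nat) : bool := `[< B (top B).-1 /\ (0 < top B)%N >].

Lemma lower_top_greatest B m : is_greatest B m -> is_greatest (lower_top B) m.-1.
Proof.
move=> Bm; rewrite /lower_top (topE Bm); case: Bm => Bm Bm_ub; split; first by right.
by move=> x [[/Bm_ub xm xNm] | ->] //=; lia.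
Qed.

Lemma lower_top_summand k B :
  interval_summand k.+1 B -> interval_summand k (lower_top B).
Proof.
move=> [m [Bm mk B_cover]]; exists m.-1; split; [exact: lower_top_greatest | lia |].
have [_ Bm_ub] := Bm; rewrite /lower_top (topE Bm) => x xk.
have [b Bb bx] := B_cover x (leqW xk).
have [bm | bNm] := eqVneq b m.
  by exists m.-1; [right | subst b; lia].
by exists b; [left; split=> //; apply/eqP | have := Bm_ub _ Bb; move/eqP: bNm; lia].
Qed.

Lemma mem_from_lower_top B m : is_greatest B m -> forall x,
  B x <-> [\/ x = m, x = m.-1 /\ top_pred_in B | x <> m.-1 /\ lower_top B x].
Proof.
move=> Bm x; have [Bm' _] := Bm; rewrite /top_pred_in /lower_top (topE Bm).
split=> [Bx | [-> | [-> /asboolP[]] | [_ [[]|]]] //].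
have [-> | xNm] := eqVneq x m; first exact: Or31.
have [xm1 | xNm1] := eqVneq x m.-1.
  by apply: Or32; split=> //; apply/asboolP; rewrite -xm1; split=> //; move/eqP: xNm; lia.
by apply: Or33; split; [|left; split=> //]; apply/eqP.
Qed.

Lemma top_pred_in_le1 B m :
  B 0%N -> is_greatest B m -> (m <= 1)%N -> top_pred_in B = (m == 1%N).
Proof.
move=> B0 Bm; rewrite /top_pred_in (topE Bm).
by case: m {Bm} => [|[|]] //= _; [apply: asboolF => -[] | apply: asboolT].
Qed.

Lemma lower_top_inj B1 B2 m1 m2 : B1 0%N -> B2 0%N ->
  is_greatest B1 m1 -> is_greatest B2 m2 ->
  top_pred_in B1 = top_pred_in B2 -> lower_top B1 = lower_top B2 -> B1 = B2.
Proof.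
move=> B10 B20 Bm1 Bm2 same_pred same_lower.
have m1m2 : m1.-1 = m2.-1.
  apply: is_greatest_uniq (lower_top_greatest Bm1) _.
  by rewrite same_lower; apply: lower_top_greatest.
have {}m1m2 : m1 = m2.
  have [/andP[m1_le1 m2_le1] | ] := boolP ((m1 <= 1) && (m2 <= 1))%N; last lia.
  by move: same_pred; rewrite (top_pred_in_le1 B10 Bm1) // (top_pred_in_le1 B20 Bm2) //; lia.
subst m2; apply/funext => x.
rewrite (propext (mem_from_lower_top Bm1 x)) (propext (mem_from_lower_top Bm2 x)).
by rewrite same_pred same_lower.
Qed.

Lemma lower_top_neq_interval k B :
  interval_summand k.+2 B -> ~~ top_pred_in B -> lower_top B <> interval k.+1.
Proof.
move=> [m [Bm mk B_cover]] /asboolPn Npred lowerB.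
have m_pred : m.-1 = k.+1.
  by apply: is_greatest_uniq (lower_top_greatest Bm) _; rewrite lowerB; split=> //=.
have [b Bb bk] := B_cover k.+1 (leqnSn _).
have bk1 : b = k.+1 by move: bk; rewrite -m_pred; lia.
by apply: Npred; rewrite (topE Bm) m_pred -bk1; split=> //; lia.
Qed.

Local Notation summands_of_interval k := (fset_set (summands (interval k))).

Lemma mem_summands_interval k B :
  B \in summands_of_interval k <-> interval_summand k B.
Proof.
rewrite in_fset_set; last exact: finite_summands_interval.
by rewrite -summands_intervalP; split=> [/set_mem | /mem_set].
Qed.

Lemma lower_top_summands k :
  {in summands_of_interval k.+1, forall B, lower_top B \in summands_of_interval k}.
Proof. by move=> B /mem_summands_interval/lower_top_summand/mem_summands_interval. Qed.

Lemma lower_top_summands_inj k : {in summands_of_interval k &, forall B1 B2,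
  top_pred_in B1 = top_pred_in B2 -> lower_top B1 = lower_top B2 -> B1 = B2}.
Proof.
move=> B1 B2 /mem_summands_interval B1k /mem_summands_interval B2k.
have [[m1 [Bm1 _ _]] [m2 [Bm2 _ _]]] := (B1k, B2k).
exact: lower_top_inj (interval_summand0 B1k) (interval_summand0 B2k) Bm1 Bm2.
Qed.

Lemma dcount_interval_le k : (dcount (interval k.+1) <= 2 * dcount (interval k))%N.
Proof.
exact: card_le_double (@lower_top_summands k) (@lower_top_summands_inj k.+1).
Qed.

Lemma dcount_interval_lt k : (dcount (interval k.+2) < 2 * dcount (interval k.+1))%N.
Proof.
apply: (card_lt_double (@lower_top_summands k.+1) (@lower_top_summands_inj k.+2)
  (y := interval k.+1)).
  exact/mem_summands_interval/interval_summand_self.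
move=> B /mem_summands_interval Bk Npred; apply/eqP.
exact: lower_top_neq_interval.
Qed.

Theorem mainTheorem7 (k : nat) (hk : (1 <= k)%N) :
  (dcount [set n | (n <= k)%N] <= 2 * dcount [set n | (n < k)%N])%N /\
  ((1 < k)%N -> (dcount [set n | (n <= k)%N] < 2 * dcount [set n | (n < k)%N])%N).
Proof.
case: k hk => [//|k] _; rewrite -[[set n | (n < k.+1)%N]]/(interval k).
split; first exact: dcount_interval_le.
by case: k => [//|k] _; apply: dcount_interval_lt.
Qed.
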